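(* Let $\xi$ be a probability measure on $\mathbb{Z}_+$ with $\xi(0)>0$, $\sum_kk\xi(k)=1$, whose support generates $\mathbb{Z}$. (i) For every $n\geq1$ with $\mathrm{GW}_\xi(\#t=n)>0$, the law $\mathrm{GW}^{(n)}_\xi=\mathrm{GW}_\xi(\cdot\mid\#t=n)$ on rooted unordered trees equals $\mathsf{Q}^q_n$, where $q_1((1))=1$ and for $n\geq2$ (with $\mathrm{GW}_\xi(\#t=n+1)>0$) and $\lambda=(\lambda_1,\dots,\lambda_p)\in\mathcal{P}_n$, $$q_n(\lambda)=\frac{p!}{\prod_{j\geq1}m_j(\lambda)!}\xi(p)\frac{\prod_{i=1}^p\mathrm{GW}_\xi(\#t=\lambda_i)}{\mathrm{GW}_\xi(\#t=n+1)}.$$ (ii) Let $X_1,X_2,\dots$ be i.i.d. with $\mathbb{P}(X_1=k)=\mathrm{GW}_\xi(\#t=k)$ and $\tau_p=X_1+\dots+X_p$. Then $q_n(p(\lambda)=p)=\xi(p)\mathbb{P}(\tau_p=n)/\mathbb{P}(\tau_1=n+1)$, and $q_n(\cdot\mid p(\lambda)=p)$ is the law of the non-increasing rearrangement of $(X_1,\dots,X_p)$ conditionally on $X_1+\dots+X_p=n$.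
   Context: $\mathrm{GW}_\xi$ is the Galton--Watson law on plane trees, $\mathrm{GW}_\xi(\{t\})=\prod_{u\in t}\xi(c_u(t))$ ($c_u$ the number of children), pushed forward to rooted unordered trees; $\#t$ is the number of vertices. $\mathcal{P}_n$ is the set of partitions of $n$, $p(\lambda)$ the number of parts and $m_j(\lambda)$ the number of parts equal to $j$. The laws $\mathsf{Q}^q_n$ on trees with $n$ vertices: $\mathsf{Q}^q_1$ is the law of the one-vertex tree; $\mathsf{Q}^q_{n+1}$ is the law of the tree whose root has as children the roots of independent trees $T^{(1)},\dots,T^{(p(\Lambda))}$ with laws $\mathsf{Q}^q_{\Lambda_i}$, where $\Lambda\sim q_n$. *)

From HB Require Import structures.
From mathcomp Require Import all_boot all_order all_algebra.
From mathcomp Require Import all_classical all_reals all_analysis.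
Set Implicit Arguments. Unset Strict Implicit. Unset Printing Implicit Defensive.
Import Order.TTheory GRing.Theory Num.Theory.

Inductive ptree := Node of seq ptree.

Fixpoint ptree_enc (t : ptree) : GenTree.tree nat :=
  let: Node cs := t in GenTree.Node 0 (map ptree_enc cs).
Fixpoint ptree_dec (t : GenTree.tree nat) : ptree :=
  match t with
  | GenTree.Leaf _ => Node [::]
  | GenTree.Node _ cs => Node (map ptree_dec cs)
  end.
Lemma ptree_encK : pcancel ptree_enc (fun x => Some (ptree_dec x)).
Proof.
rewrite /pcancel; fix IH 1; case=> cs /=; congr (Some (Node _)).
elim: cs => //= c cs IHcs; case: (IH c) => ->; by rewrite IHcs.
Qed.
HB.instance Definition _ := Countable.copy ptree (pcan_type ptree_encK).

Definition children (t : ptree) : seq ptree := let: Node cs := t in cs.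

Fixpoint tsize (t : ptree) : nat :=
  let: Node cs := t in (sumn (map tsize cs)).+1.

(* canonical representative of the rooted unordered tree underlying t:
   children canonicalized recursively, then sorted (pickle is injective) *)
Fixpoint canon (t : ptree) : ptree :=
  let: Node cs := t in
  Node (sort (fun a b => pickle a <= pickle b) (map canon cs)).

Fixpoint prodlists (T : Type) (As : seq (seq T)) : seq (seq T) :=
  match As with
  | [::] => [:: [::]]
  | A :: As' => [seq a :: s | a <- A, s <- prodlists As']
  end.

Fixpoint trees (m : nat) : seq ptree :=
  match m with
  | 0 => [::]
  | m'.+1 => [seq Node f | f <- flatten [seq prodlists (nseq k (trees m')) | k <- iota 0 m]]
  end.

Definition ptrees (n : nat) : seq ptree := undup [seq t <- trees n | tsize t == n].

Definition utrees (n : nat) : seq ptree := undup (map canon (ptrees n)).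

Definition nonincr (s : seq nat) : seq nat := sort (fun a b => b <= a) s.

Definition compositions (p n : nat) : seq (seq nat) :=
  [seq x <- prodlists (nseq p (iota 0 n.+1)) | sumn x == n].

Definition partitions (n : nat) : seq (seq nat) :=
  undup [seq l <- flatten [seq compositions p n | p <- iota 0 n.+1]
        | sorted (fun a b => b <= a) l & all (fun k => 0 < k) l].

Definition mult (j : nat) (l : seq nat) : nat := count_mem j l.

Section GW.
Variable R : realType.
Variable xi : nat -> R.

(* GW_xi({t}) = prod_{u in t} xi(c_u(t)) on plane trees *)
Fixpoint gw (t : ptree) : R :=
  let: Node cs := t in (xi (size cs) * \prod_(x <- map gw cs) x)%R.

Definition gw_size (n : nat) : R := (\sum_(t <- ptrees n) gw t)%R.

Definition gw_unord (u : ptree) : R :=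
  (\sum_(t <- ptrees (tsize u) | canon t == canon u) gw t)%R.

Definition gw_cond (n : nat) (u : ptree) : R :=
  if tsize u == n then (gw_unord u / gw_size n)%R else 0%R.

Definition q_formula (n : nat) (l : seq nat) : R :=
  ((size l)`!%:R / (\prod_(1 <= j < n.+1) (mult j l)`!)%:R * xi (size l)
   * (\prod_(k <- l) gw_size k) / gw_size n.+1)%R.

(* P(X_1 = k) = GW(#t = k), X_i i.i.d.;  P(tau_p = n) *)
Definition P_tau (p n : nat) : R :=
  (\sum_(x <- compositions p n) \prod_(k <- x) gw_size k)%R.

(* P(nonincreasing rearrangement of (X_1..X_p) = l, X_1+...+X_p = n) *)
Definition P_sorted_tau (p n : nat) (l : seq nat) : R :=
  (\sum_(x <- compositions p n | nonincr x == l) \prod_(k <- x) gw_size k)%R.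
End GW.

(* Qfuel R q fuel n u : value at (the class of) u of Q^q_n, valid when n <= fuel.
   Q^q_1 = point mass at the one-vertex tree;
   Q^q_{m+1}(u) = sum_{lambda in P_m} q_m(lambda) *
       P( root with children independent T^(i) ~ Q^q_{lambda_i} is isomorphic to u ). *)
Fixpoint Qfuel (R : realType) (q : nat -> seq nat -> R) (fuel n : nat) (u : ptree) : R :=
  match fuel with
  | 0 => 0%R
  | fuel'.+1 =>
    match n with
    | 0 => 0%R
    | 1 => if canon u == Node [::] then 1%R else 0%R
    | m.+1 =>
      (\sum_(l <- partitions m)
         q m l * \sum_(ts <- prodlists [seq utrees k | k <- l]
                       | canon (Node ts) == canon u)
                   \prod_(kt <- zip l ts) Qfuel q fuel' kt.1 kt.2)%R
    end
  end.

Definition Qlaw (R : realType) (q : nat -> seq nat -> R) (n : nat) (u : ptree) : R :=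
  Qfuel q n n u.

Definition support_generates_Z (R : realType) (xi : nat -> R) : Prop :=
  forall H : int -> Prop,
    H 0%Z -> (forall a b, H a -> H b -> H (a - b)%R) ->
    (forall k, xi k != 0%R -> H (Posz k)) -> forall z, H z.

(* The multinomial
   coefficient in q_{m+1}(l) counts exactly these rearrangements, so, by induction on the
   size, GW(#t = k) Q_k(u) is the GW-mass of the unordered class of u among trees with k
   vertices; dividing by GW(#t = k) gives GW^(k).
   (ii) Grouping the compositions of n into p parts by their non-increasing rearrangement
   writes P(tau_p = n) as the sum, over partitions l of n into p parts, of the number of
   rearrangements of l times prod_i GW(#t = l_i), which is GW(#t = n + 1) q_n(l) / xi(p). *)

From Pilot Require Import Defs.
From HB Require Import structures.
From mathcomp Require Import all_boot all_order all_algebra.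
From mathcomp Require Import all_classical all_reals all_analysis.
From mathcomp Require Import ring.
Import Order.TTheory GRing.Theory Num.Theory.
Import numFieldNormedType.Exports.
(* Re-import so that [Defs.tsize] shadows [tuple.tsize]. *)
Import Defs.

Set Implicit Arguments. Unset Strict Implicit. Unset Printing Implicit Defensive.

Section BigSeq.
Local Open Scope ring_scope.
Variable V : nmodType.

Lemma big_pred1_uniq (J : eqType) (B : seq J) (y : J) (G : J -> V) :
  uniq B -> \sum_(b <- B | y == b) G b = if y \in B then G y else 0.
Proof.
elim: B => [|b B IH] /=; first by rewrite big_nil.
move=> /andP[bB uB]; rewrite big_cons IH // inE.
by case: eqP => [->|_] //=; rewrite (negPf bB) addr0.
Qed.

Lemma sum_fibers_seq (I J : eqType) (A : seq I) (B : seq J) (f : I -> J) (X : I -> V) :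
  uniq B -> \sum_(b <- B) \sum_(a <- A | f a == b) X a = \sum_(a <- A | f a \in B) X a.
Proof.
move=> uB; under eq_bigr => b _ do rewrite big_mkcond.
rewrite exchange_big /= [RHS]big_mkcond; apply: eq_bigr => a _.
by rewrite -big_mkcond /= big_pred1_uniq.
Qed.

Lemma big_prodlists_cons (T : Type) (A : seq T) As (G : seq T -> V) :
  \sum_(s <- prodlists (A :: As)) G s = \sum_(a <- A) \sum_(s <- prodlists As) G (a :: s).
Proof. exact: big_allpairs_dep. Qed.

Lemma big_prodlists_cat (T : Type) (X Y : seq (seq T)) (G : seq T -> V) :
  \sum_(z <- prodlists (X ++ Y)) G z =
  \sum_(x <- prodlists X) \sum_(y <- prodlists Y) G (x ++ y).
Proof.
elim: X G => [|A X IH] G; first by rewrite /= big_cons big_nil addr0.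
by rewrite cat_cons !big_prodlists_cons; apply: eq_bigr => a _; rewrite IH.
Qed.

Lemma big_prodlists_perm (T : eqType) (Ls Ls' : seq (seq T)) (H : seq T -> V) :
  (forall s s', perm_eq s s' -> H s = H s') -> perm_eq Ls' Ls ->
  \sum_(s <- prodlists Ls') H s = \sum_(s <- prodlists Ls) H s.
Proof.
elim: Ls Ls' H => [|L Ls IH] Ls' H Hsym; first by move/perm_nilP => ->.
move=> pL; have LLs' : L \in Ls' by rewrite (perm_mem pL) mem_head.
move: pL; case/splitPr: LLs' => Ls1 Ls2 pL.
have p12 : perm_eq (Ls1 ++ Ls2) Ls by rewrite -(perm_cons L) (perm_catCA [:: L]).
rewrite big_prodlists_cat big_prodlists_cons.
transitivity (\sum_(x <- prodlists Ls1) \sum_(a <- L)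
   \sum_(y <- prodlists Ls2) H (a :: (x ++ y))).
  apply: eq_bigr => x _; rewrite big_prodlists_cons; apply: eq_bigr => a _.
  by apply: eq_bigr => y _; apply: Hsym; rewrite -cat1s perm_catCA.
rewrite exchange_big /=; apply: eq_bigr => a _.
rewrite -(IH (Ls1 ++ Ls2) (fun s => H (a :: s))) ?big_prodlists_cat //.
by move=> s s' pss'; apply: Hsym; rewrite perm_cons.
Qed.
End BigSeq.

Lemma sumr_const_seq (R : pzSemiRingType) (T : Type) (r : seq T) (c : R) :
  (\sum_(i <- r) c = (size r)%:R * c)%R.
Proof. by rewrite big_const_seq count_predT iter_addr_0 mulr_natl. Qed.

Lemma mem_prodlists (T : eqType) (As : seq (seq T)) s :
  (s \in prodlists As) = (size s == size As) && all2 (fun a A => a \in A) s As.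
Proof.
elim: As s => [|A As IH] [|a s] //=; first by apply/allpairsP => -[[x y] [_ _ /=]].
apply/allpairsP/idP => [[[x y] [/= xA yAs [-> ->]]]|]; first by rewrite xA eqSS -IH.
by rewrite eqSS => /and3P[e aA sAs]; exists (a, s); rewrite //= aA IH e.
Qed.

Lemma all2_mem_nseq (T : eqType) (s B : seq T) :
  all2 (fun a A => a \in A) s (nseq (size s) B) = all (mem B) s.
Proof. by elim: s => //= a s ->. Qed.

Lemma mem_prodlists_nseq (T : eqType) p (B : seq T) x :
  (x \in prodlists (nseq p B)) = (size x == p) && all (mem B) x.
Proof. by rewrite mem_prodlists size_nseq; case: eqP => // <-; rewrite all2_mem_nseq. Qed.

Lemma prodlists_uniq (T : eqType) (As : seq (seq T)) :
  all uniq As -> uniq (prodlists As).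
Proof.
elim: As => [|A As IH] //= /andP[uA uAs].
by apply: allpairs_uniq => // [|[x y] [x' y'] _ _ /= [-> ->]]; [apply: IH|].
Qed.

Section ProdlistsFibers.
Local Open Scope ring_scope.
Variable R : comPzRingType.

Lemma prod_zip_mull (T : Type) (a : nat -> R) (b : nat * T -> R) l (ts : seq T) :
  size ts = size l ->
  \prod_(k <- l) a k * \prod_(kt <- zip l ts) b kt = \prod_(kt <- zip l ts) (a kt.1 * b kt).
Proof.
elim: l ts => [|k l IH] [|t ts] //=; first by rewrite !big_nil mulr1.
move=> [/IH e]; rewrite !big_cons -e /= -!mulrA; congr (_ * _).
by rewrite mulrCA.
Qed.

(* Summing over the classes [b \in B k] of [f] in each coordinate is summing over [A k]. *)
Lemma big_prodlists_fibers (T U : eqType) (A : nat -> seq T) (B : nat -> seq U)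
    (f : T -> U) (h : U -> U) (w : T -> R) (l : seq nat) (g : seq U -> R) :
  (forall k a, a \in A k -> f a \in B k) -> (forall k, uniq (B k)) ->
  (forall k b, b \in B k -> h b = b) ->
  \sum_(ts <- prodlists (map B l)) g ts *
     \prod_(kt <- zip l ts) \sum_(a <- A kt.1 | f a == h kt.2) w a =
  \sum_(cs <- prodlists (map A l)) g (map f cs) * \prod_(c <- cs) w c.
Proof.
move=> fAB uB hB; elim: l g => [|k l IH] g; first by rewrite /= !big_seq1 !big_nil.
rewrite map_cons !big_prodlists_cons.
transitivity (\sum_(b <- B k) \sum_(a <- A k | f a == b) (w a *
   \sum_(cs <- prodlists (map A l)) g (f a :: map f cs) * \prod_(c <- cs) w c)).
  rewrite big_seq [RHS]big_seq; apply: eq_bigr => b bB.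
  under [RHS]eq_bigr => a /eqP fab do rewrite fab.
  rewrite -mulr_suml -(IH (fun s => g (b :: s))) mulr_sumr; apply: eq_bigr => s _.
  by rewrite big_cons /= (hB _ _ bB) mulrCA.
rewrite sum_fibers_seq //= -big_filter (all_filterP _); last first.
  by apply/allP => a /fAB.
apply: eq_bigr => a _; rewrite mulr_sumr; apply: eq_bigr => cs _.
by rewrite big_cons /= mulrCA.
Qed.
End ProdlistsFibers.

Lemma prod_fact_count_rem (T : eqType) (A s : seq T) x :
  uniq A -> x \in A -> x \in s ->
  \prod_(y <- A) (count_mem y s)`! = \prod_(y <- A) (count_mem y (rem x s))`! * count_mem x s.
Proof.
move=> uA xA xs.
have cE y : count_mem y s = (x == y) + count_mem y (rem x s).
  by rewrite (permP (perm_to_rem xs)) /= eq_sym.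
rewrite (bigD1_seq x) //= [X in _ = X * _](bigD1_seq x) //= cE eqxx add1n factS.
rewrite [RHS]mulnC [RHS]mulnA; congr (_ * _); apply: eq_bigr => y yx.
by rewrite cE eq_sym (negPf yx).
Qed.

Lemma sum_count_mem_undup (T : eqType) (s : seq T) :
  \sum_(x <- undup s) count_mem x s = size s.
Proof.
rewrite -[RHS](perm_size (perm_count_undup s)) size_flatten /shape -map_comp sumnE.
by rewrite big_map; apply: eq_bigr => x _ /=; rewrite size_nseq.
Qed.

Lemma size_permutations_count (T : eqType) (A s : seq T) : uniq A -> {subset s <= A} ->
  size (permutations s) * \prod_(y <- A) (count_mem y s)`! = (size s)`!.
Proof.
move=> uA; move Dn: (size s) => n; elim: n s Dn => [|n IH] s Dn sA.
  by move/size0nil: Dn => ->; rewrite big1.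
have s0 : 0 < size s by rewrite Dn.
rewrite (perm_size (permutationsE s0)) size_allpairs_dep sumnE big_map big_distrl /=.
rewrite factS -[n.+1]Dn -sum_count_mem_undup big_distrl /=.
rewrite big_seq [RHS]big_seq; apply: eq_bigr => x; rewrite mem_undup => xs.
rewrite (prod_fact_count_rem uA (sA _ xs) xs) mulnA IH 1?mulnC ?size_rem ?Dn //.
by move=> y /mem_rem /sA.
Qed.

Lemma mem_leq_sumn (x : seq nat) a : a \in x -> a <= sumn x.
Proof.
elim: x => //= b x IH; rewrite inE => /orP[/eqP->|/IH h]; first exact: leq_addr.
exact: leq_trans h (leq_addl _ _).
Qed.

Lemma size_leq_sumn (l : seq nat) : all (leq 1) l -> size l <= sumn l.
Proof. by elim: l => //= a l IH /andP[a0 /IH h]; rewrite -add1n leq_add. Qed.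

Lemma ptree_nested_ind (P : ptree -> Prop) :
  (forall cs, (forall c, c \in cs -> P c) -> P (Node cs)) -> forall t, P t.
Proof.
move=> IH; fix F 1; case=> cs; apply: IH.
elim: cs => [|c cs IHcs] x; first by rewrite in_nil => h; discriminate h.
by rewrite inE => /orP[/eqP->|/IHcs]; [apply: F|].
Qed.

Lemma Node_inj : injective Node. Proof. by move=> a b [->]. Qed.

Lemma mem_trees m t : tsize t <= m -> t \in trees m.
Proof.
elim: m t => [|m IH] [cs] //; rewrite [tsize _]/= ltnS => hs.
change (Node cs \in [seq Node f | f <- flatten
  [seq prodlists (nseq k (trees m)) | k <- iota 0 m.+1]]).
have tsize_pos : all (leq 1) (map tsize cs) by apply/allP => _ /mapP[[?] _ ->].
rewrite (mem_map Node_inj); apply/flattenP; exists (prodlists (nseq (size cs) (trees m))).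
  apply: (map_f (fun k => prodlists (nseq k (trees m)))).
  by rewrite mem_iota ltnS (leq_trans _ hs) // -(size_map tsize) size_leq_sumn.
rewrite mem_prodlists_nseq eqxx; apply/allP => c cin; apply/IH/(leq_trans _ hs).
exact/mem_leq_sumn/map_f.
Qed.

Lemma mem_ptrees n t : (t \in ptrees n) = (tsize t == n).
Proof. by rewrite mem_undup mem_filter andb_idr // => /eqP e; apply: mem_trees; rewrite e. Qed.

Lemma ptrees_uniq n : uniq (ptrees n).
Proof. exact: undup_uniq. Qed.

Lemma ptrees1 : ptrees 1 = [:: Node [::]].
Proof. by []. Qed.

Section Canon.

Let pickle_le := fun a b : ptree => pickle a <= pickle b.

Let pickle_le_total : total pickle_le.
Proof. by move=> a b; apply: leq_total. Qed.

Let pickle_le_trans : transitive pickle_le.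
Proof. by move=> a b c; apply: leq_trans. Qed.

Let pickle_le_anti : antisymmetric pickle_le.
Proof. by move=> a b /anti_leq /(pcan_inj (@pickleK_inv _)). Qed.

Lemma canonE cs : canon (Node cs) = Node (sort pickle_le (map canon cs)).
Proof. by []. Qed.

Lemma tsize_canon t : tsize (canon t) = tsize t.
Proof.
elim/ptree_nested_ind: t => cs IH; rewrite canonE /=.
rewrite (perm_sumn (perm_map _ (permEl (perm_sort _ _)))) -map_comp.
by congr (sumn _).+1; apply/eq_in_map => c /IH.
Qed.

Lemma canonK t : canon (canon t) = canon t.
Proof.
elim/ptree_nested_ind: t => cs IH; rewrite canonE [LHS]canonE.
have -> : map canon (sort pickle_le (map canon cs)) = sort pickle_le (map canon cs).
  rewrite -[RHS]map_id; apply/eq_in_map => y.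
  by rewrite mem_sort => /mapP[c /IH + ->].
by rewrite (sorted_sort pickle_le_trans (sort_sorted pickle_le_total _)).
Qed.

Lemma canon_perm cs cs' : perm_eq cs cs' -> canon (Node cs) = canon (Node cs').
Proof.
move=> p; rewrite !canonE; congr Node.
exact/(perm_sortP pickle_le_total pickle_le_trans pickle_le_anti)/perm_map.
Qed.

Lemma canon_map_canon cs : canon (Node (map canon cs)) = canon (Node cs).
Proof. by rewrite !canonE -map_comp (eq_map canonK). Qed.

End Canon.

Lemma mem_utrees k u : u \in utrees k -> canon u = u /\ tsize u = k.
Proof.
rewrite mem_undup => /mapP[t]; rewrite mem_ptrees => /eqP <- ->.
by rewrite canonK tsize_canon.
Qed.

Lemma canon_in_utrees k t : t \in ptrees k -> canon t \in utrees k.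
Proof. by move=> h; rewrite mem_undup; apply: map_f. Qed.

Lemma utrees_uniq k : uniq (utrees k).
Proof. exact: undup_uniq. Qed.

Section Partitions.

Local Notation geqn := (fun a b : nat => b <= a).

Let geqn_total : total geqn.
Proof. by move=> a b; rewrite orbC leq_total. Qed.

Let geqn_trans : transitive geqn.
Proof. by move=> a b c h1 h2; rewrite (leq_trans h2 h1). Qed.

Let geqn_anti : antisymmetric geqn.
Proof. by move=> a b /andP[h1 h2]; apply/anti_leq/andP. Qed.

Lemma mem_compositions p n x :
  (x \in compositions p n) = (size x == p) && (sumn x == n).
Proof.
rewrite mem_filter mem_prodlists_nseq.
apply/and3P/andP => [[-> -> _] //|[-> /eqP sx]]; split=> //; first exact/eqP.
apply/allP => a /mem_leq_sumn; rewrite sx => ha.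
by change (a \in iota 0 n.+1); rewrite mem_iota.
Qed.

Lemma compositions_uniq p n : uniq (compositions p n).
Proof. by apply/filter_uniq/prodlists_uniq/allP => B /nseqP[-> _]; apply: iota_uniq. Qed.

Lemma mem_partitions n l :
  (l \in partitions n) = [&& sorted geqn l, all (leq 1) l & sumn l == n].
Proof.
rewrite mem_undup mem_filter.
apply/andP/idP => [[/andP[-> ->] /flattenP[C /mapP[p _ ->]]]|/and3P[so po se]].
  by rewrite mem_compositions => /andP[_ ->].
split; first by rewrite so po.
apply/flattenP; exists (compositions (size l) n); last by rewrite mem_compositions eqxx.
apply: (map_f (fun p => compositions p n)).
by rewrite mem_iota ltnS -(eqP se) size_leq_sumn.
Qed.

Lemma partitions_uniq n : uniq (partitions n).
Proof. exact: undup_uniq. Qed.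

Lemma partitions1 : partitions 1 = [:: [:: 1]].
Proof. by []. Qed.

Lemma sorted_nonincr x : sorted geqn (nonincr x).
Proof. exact: sort_sorted. Qed.

Lemma perm_nonincr x : perm_eq (nonincr x) x.
Proof. exact/permEl/perm_sort. Qed.

Lemma nonincr_eq_perm (l x : seq nat) : sorted geqn l -> (nonincr x == l) = perm_eq x l.
Proof.
move=> sl; apply/eqP/idP => [<-|p]; first by rewrite perm_sym perm_nonincr.
by rewrite -(sorted_sort geqn_trans sl); apply/(perm_sortP geqn_total geqn_trans geqn_anti).
Qed.

Lemma size_permutations_partition (R : numFieldType) n l : l \in partitions n ->
  ((size l)`!%:R / (\prod_(1 <= j < n.+1) (mult j l)`!)%:R = (size (permutations l))%:R :> R)%R.
Proof.
rewrite mem_partitions => /and3P[_ pl sm].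
rewrite -(@size_permutations_count _ (index_iota 1 n.+1)) ?iota_uniq //.
  by rewrite natrM mulfK // pnatr_eq0 -lt0n prodn_gt0 // => j; apply: fact_gt0.
move=> k kl; rewrite mem_index_iota (allP pl k kl) ltnS -(eqP sm).
exact: mem_leq_sumn.
Qed.

Lemma filter_nonincr_compositions p n l : l \in partitions n -> size l = p ->
  perm_eq [seq x <- compositions p n | nonincr x == l] (permutations l).
Proof.
rewrite mem_partitions => /and3P[sl _ sm] sp.
apply: uniq_perm; [exact/filter_uniq/compositions_uniq | exact: permutations_uniq|].
move=> x; rewrite mem_filter mem_permutations (nonincr_eq_perm _ sl) mem_compositions.
by case px: (perm_eq x l); rewrite //= (perm_size px) sp eqxx (perm_sumn px).
Qed.

Lemma mem_prodlists_ptrees cs k : (cs \in prodlists (map ptrees k)) = (map tsize cs == k).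
Proof.
rewrite mem_prodlists; elim: cs k => [|c cs IH] [|k ks] //=.
by rewrite eqSS mem_ptrees eqseq_cons andbCA IH.
Qed.

(* The children of a tree of size [m + 1] have sizes listed by some rearrangement of a
   partition of [m]. *)
Lemma big_ptrees_root (V : nmodType) (F : ptree -> V) m :
  (\sum_(t <- ptrees m.+1) F t =
   \sum_(l <- partitions m) \sum_(k <- permutations l)
      \sum_(cs <- prodlists (map ptrees k)) F (Node cs))%R.
Proof.
pose sizes t := map tsize (children t).
transitivity (\sum_(l <- partitions m) \sum_(t <- ptrees m.+1 | nonincr (sizes t) == l) F t)%R.
  rewrite sum_fibers_seq ?partitions_uniq // [RHS]big_seq_cond [LHS]big_seq.
  apply: eq_bigl => -[cs]; rewrite mem_ptrees; case: eqP => //= [[e]].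
  rewrite mem_partitions sorted_nonincr (perm_all _ (perm_nonincr _)).
  rewrite (perm_sumn (perm_nonincr _)) e eqxx andbT.
  by apply/esym/allP => k /mapP[[c] _ ->].
rewrite big_seq [RHS]big_seq; apply: eq_bigr => l.
rewrite mem_partitions => /and3P[sl _ sm].
transitivity (\sum_(t <- [seq t <- ptrees m.+1 | nonincr (sizes t) == l]
                | sizes t \in permutations l) F t)%R.
  rewrite big_filter_cond; apply: eq_bigl => t; rewrite mem_permutations -(nonincr_eq_perm _ sl).
  by case: (_ == l).
rewrite -sum_fibers_seq ?permutations_uniq //.
rewrite big_seq [RHS]big_seq; apply: eq_bigr => k; rewrite mem_permutations => pk.
rewrite -big_filter -[RHS](big_map Node xpredT); apply: perm_big; apply: uniq_perm.
- by do 2 apply: filter_uniq; exact: ptrees_uniq.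
- rewrite (map_inj_uniq Node_inj); apply: prodlists_uniq.
  by apply/allP => B /mapP[j _ ->]; exact: ptrees_uniq.
case=> cs; rewrite (mem_map Node_inj) mem_prodlists_ptrees !mem_filter mem_ptrees /sizes /=.
case: eqP => //= ->.
by rewrite (nonincr_eq_perm _ sl) pk (perm_sumn pk) (eqP sm) eqxx.
Qed.

End Partitions.

Section GaltonWatson.
Local Open Scope ring_scope.
Variable R : realType.
Variable xi : nat -> R.

Lemma gwE cs : gw xi (Node cs) = xi (size cs) * \prod_(c <- cs) gw xi c.
Proof. by rewrite /= big_map. Qed.

Lemma gw_size0 : gw_size xi 0 = 0.
Proof. by rewrite /gw_size big_nil. Qed.

Lemma gw_size1 : gw_size xi 1 = xi 0.
Proof. by rewrite /gw_size big_seq1 gwE big_nil mulr1. Qed.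

Lemma gw_size2 : gw_size xi 2 = xi 1 * xi 0.
Proof. by rewrite /gw_size big_seq1 gwE big_seq1 gwE big_nil mulr1. Qed.

Definition gw_class k u := \sum_(t <- ptrees k | canon t == canon u) gw xi t.

Definition gw_in_class u t := if canon t == canon u then gw xi t else 0.

Lemma gw_class_cond k u : gw_class k u = if tsize u == k then gw_unord xi u else 0.
Proof.
rewrite /gw_unord; case: eqP => [<- //|ne]; rewrite /gw_class big_seq_cond big_pred0 // => t.
rewrite mem_ptrees; apply/negP => /andP[/eqP st /eqP ct]; apply: ne.
by rewrite -st -tsize_canon -ct tsize_canon.
Qed.

Lemma gw_in_class_perm u cs cs' :
  perm_eq cs cs' -> gw_in_class u (Node cs) = gw_in_class u (Node cs').
Proof. by move=> p; rewrite /gw_in_class (canon_perm p) !gwE (perm_size p) (perm_big _ p). Qed.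

Lemma gw_class_root m u : gw_class m.+1 u =
  \sum_(l <- partitions m) (size (permutations l))%:R *
     \sum_(cs <- prodlists (map ptrees l)) gw_in_class u (Node cs).
Proof.
rewrite /gw_class big_mkcond big_ptrees_root; apply: eq_bigr => l _.
rewrite -sumr_const_seq big_seq [RHS]big_seq; apply: eq_bigr => k.
rewrite mem_permutations => pk; apply: big_prodlists_perm; last exact: perm_map.
exact: gw_in_class_perm.
Qed.

Lemma big_utrees_gw_class l (g : seq ptree -> R) :
  \sum_(ts <- prodlists (map utrees l)) g ts * \prod_(kt <- zip l ts) gw_class kt.1 kt.2 =
  \sum_(cs <- prodlists (map ptrees l)) g (map canon cs) * \prod_(c <- cs) gw xi c.
Proof.
apply: big_prodlists_fibers; [exact: canon_in_utrees | exact: utrees_uniq |].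
by move=> k b /mem_utrees[].
Qed.

Lemma gw_size_q_formula m l : l \in partitions m -> gw_size xi m.+1 != 0 ->
  gw_size xi m.+1 * q_formula xi m l =
  (size (permutations l))%:R * xi (size l) * \prod_(k <- l) gw_size xi k.
Proof. by move=> lP G0; rewrite /q_formula (size_permutations_partition _ lP) mulrC divfK. Qed.

Hypothesis xi_ge0 : forall k, 0 <= xi k.

Lemma gw_ge0 t : 0 <= gw xi t.
Proof.
elim/ptree_nested_ind: t => cs IH; rewrite gwE mulr_ge0 //.
by rewrite big_seq prodr_ge0 // => c /IH.
Qed.

Lemma gw_size_ge0 k : 0 <= gw_size xi k.
Proof. by rewrite sumr_ge0 // => t _; apply: gw_ge0. Qed.

Lemma gw_class_eq0 k u : gw_size xi k = 0 -> gw_class k u = 0.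
Proof.
move=> G0; apply/eqP; rewrite eq_le sumr_ge0 => [|t _]; last exact: gw_ge0.
rewrite -G0 [leRHS](bigID (fun t => canon t == canon u)) lerDl.
by rewrite sumr_ge0 // => t _; apply: gw_ge0.
Qed.

End GaltonWatson.

Section LawQ.
Local Open Scope ring_scope.
Variables (R : realType) (xi : nat -> R) (q : nat -> seq nat -> R).
Hypothesis xi_ge0 : forall k, 0 <= xi k.
Hypothesis q_formulaE : forall m, (0 < m)%N -> 0 < gw_size xi m.+1 ->
  forall l, l \in partitions m -> q m l = q_formula xi m l.

Lemma QfuelE f m u : Qfuel q f.+1 m.+2 u =
  \sum_(l <- partitions m.+1) q m.+1 l *
    \sum_(ts <- prodlists [seq utrees k | k <- l] | canon (Node ts) == canon u)
       \prod_(kt <- zip l ts) Qfuel q f kt.1 kt.2.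
Proof. by []. Qed.

(* Multiplied by [gw_size], the recursion defining [Q] is the root decomposition
   [gw_class_root] grouped by the classes of the children. *)
Lemma gw_size_Qfuel f k u : (0 < k <= f)%N -> gw_size xi k * Qfuel q f k u = gw_class xi k u.
Proof.
elim: f k u => [|f IH] [|[|m]] u // hk.
  rewrite gw_size1 /gw_class ptrees1 big_mkcond big_seq1 gwE big_nil mulr1 /= eq_sym.
  by case: ifP; rewrite ?mulr1 ?mulr0.
have [G0|Gpos] := eqVneq (gw_size xi m.+2) 0; first by rewrite G0 mul0r gw_class_eq0.
have {}Gpos : 0 < gw_size xi m.+2 by rewrite lt0r Gpos gw_size_ge0.
rewrite QfuelE mulr_sumr gw_class_root // big_seq [RHS]big_seq; apply: eq_bigr => l lP.
rewrite mulrA q_formulaE // gw_size_q_formula ?lt0r_neq0 // -!mulrA; congr (_ * _).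
pose g ts := if canon (Node ts) == canon u then xi (size ts) else 0.
transitivity (\sum_(cs <- prodlists (map ptrees l)) g (map canon cs) * \prod_(c <- cs) gw xi c).
  rewrite -big_utrees_gw_class !mulr_sumr [LHS]big_mkcond.
  apply: eq_big_seq => ts; rewrite mem_prodlists size_map => /andP[/eqP sts _].
  rewrite /g; case: ifP => _; rewrite ?mulr0 ?mul0r // prod_zip_mull // sts.
  congr (_ * _); rewrite big_seq [RHS]big_seq; apply: eq_bigr => kt ktin; rewrite IH //.
  have := map_f (@fst _ _) ktin; rewrite -/(unzip1 _) unzip1_zip ?sts // => kl.
  move: lP; rewrite mem_partitions => /and3P[_ /allP/(_ _ kl) -> /eqP sm] /=.
  by apply: leq_trans (mem_leq_sumn kl) _; rewrite sm; case/andP: hk.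
apply: eq_bigr => cs _; rewrite /g canon_map_canon size_map /gw_in_class gwE.
by case: ifP; rewrite ?mul0r.
Qed.

End LawQ.

Section Compositions.
Local Open Scope ring_scope.
Variables (R : realType) (xi : nat -> R).

Lemma P_tau1 N : P_tau xi 1 N = gw_size xi N.
Proof.
rewrite /P_tau big_filter big_mkcond big_prodlists_cons.
transitivity (\sum_(a <- iota 0 N.+1 | N == a) gw_size xi a).
  rewrite [RHS]big_mkcond; apply: eq_bigr => a _.
  by rewrite big_seq1 /= addn0 eq_sym; case: (N == a); rewrite // big_seq1.
by rewrite big_pred1_uniq ?iota_uniq // mem_iota ltnSn.
Qed.

Lemma P_sorted_tau_partition p n l : l \in partitions n -> size l = p ->
  P_sorted_tau xi p n l = (size (permutations l))%:R * \prod_(k <- l) gw_size xi k.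
Proof.
move=> lP sp; rewrite /P_sorted_tau -[LHS]big_filter (perm_big (permutations l)).
  by rewrite -sumr_const_seq; apply: eq_big_seq => x; rewrite mem_permutations; apply: perm_big.
exact: filter_nonincr_compositions.
Qed.

Lemma P_sorted_tau_size p n l : size l != p -> P_sorted_tau xi p n l = 0.
Proof.
move=> sp; rewrite /P_sorted_tau big_seq_cond big_pred0 // => x.
rewrite mem_compositions; apply/negP => /andP[/andP[/eqP sx _] /eqP e].
by move: sp; rewrite -e -sx size_sort eqxx.
Qed.

(* Compositions with a zero part have mass [0], as no tree has [0] vertices; the other
   compositions are grouped by their non-increasing rearrangement. *)
Lemma P_tau_partitions p n : P_tau xi p n =
  \sum_(l <- partitions n | size l == p) (size (permutations l))%:R * \prod_(k <- l) gw_size xi k.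
Proof.
rewrite /P_tau (bigID (fun x => nonincr x \in [seq l <- partitions n | size l == p])) /=.
rewrite [X in _ + X]big_seq_cond [X in _ + X]big1 ?addr0; last first.
  move=> x /andP[]; rewrite mem_compositions => /andP[/eqP sx /eqP se].
  rewrite mem_filter mem_partitions sorted_nonincr size_sort sx eqxx.
  rewrite (perm_all _ (perm_nonincr _)) (perm_sumn (perm_nonincr _)) se eqxx andbT /=.
  case/allPn => k kx; rewrite lt0n negbK => /eqP k0.
  by rewrite (big_rem _ kx) /= k0 gw_size0 mul0r.
rewrite -sum_fibers_seq ?filter_uniq ?partitions_uniq // big_filter.
rewrite big_seq_cond [RHS]big_seq_cond; apply: eq_bigr => l /andP[lP /eqP sp].
by rewrite -(P_sorted_tau_partition lP sp).
Qed.

End Compositions.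

Lemma q_formula1 (R : realType) (xi : nat -> R) :
  (0 < gw_size xi 2 -> q_formula xi 1 [:: 1] = 1)%R.
Proof.
move=> G2; rewrite /q_formula big_nat1 big_seq1 gw_size1 gw_size2 /= mul1r invr1 mul1r.
by rewrite mulfV // -gw_size2 gt_eqF.
Qed.

Section Proposition14.
Local Open Scope ring_scope.
Variables (R : realType) (xi : nat -> R) (q : nat -> seq nat -> R).
Hypothesis xi_ge0 : forall k, 0 <= xi k.
Hypothesis q_formulaE : forall m, (0 < m)%N -> 0 < gw_size xi m.+1 ->
  forall l, l \in partitions m -> q m l = q_formula xi m l.

Lemma gw_cond_Qlaw n u : (0 < n)%N -> 0 < gw_size xi n -> gw_cond xi n u = Qlaw q n u.
Proof.
move=> n0 Gn; rewrite /Qlaw -[Qfuel _ _ _ _](mulKf (lt0r_neq0 Gn)) gw_size_Qfuel ?n0 ?leqnn //.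
by rewrite gw_class_cond /gw_cond; case: ifP; rewrite ?mulr0 // mulrC.
Qed.

Lemma q_partition n l : (0 < n)%N -> 0 < gw_size xi n.+1 -> l \in partitions n ->
  q n l = (size (permutations l))%:R * xi (size l) * \prod_(k <- l) gw_size xi k / gw_size xi n.+1.
Proof.
move=> n0 Gn lP; rewrite q_formulaE // -(gw_size_q_formula lP) ?lt0r_neq0 //.
by rewrite mulrC mulKf ?lt0r_neq0.
Qed.

Lemma sum_q_size n p : (0 < n)%N -> 0 < gw_size xi n.+1 ->
  \sum_(l <- partitions n | size l == p) q n l = xi p * P_tau xi p n / P_tau xi 1 n.+1.
Proof.
move=> n0 Gn; rewrite P_tau1 P_tau_partitions mulr_sumr mulr_suml.
rewrite big_seq_cond [RHS]big_seq_cond; apply: eq_bigr => l /andP[lP /eqP <-].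
by rewrite q_partition // mulrCA mulrA.
Qed.

Lemma q_cond_size n p l : (0 < n)%N -> 0 < gw_size xi n.+1 ->
  0 < \sum_(l' <- partitions n | size l' == p) q n l' -> l \in partitions n ->
  (if size l == p then q n l else 0) / \sum_(l' <- partitions n | size l' == p) q n l' =
  P_sorted_tau xi p n l / P_tau xi p n.
Proof.
move=> n0 Gn; rewrite sum_q_size // P_tau1 => Spos lP.
have [sp|sp] := eqVneq (size l) p; last by rewrite P_sorted_tau_size ?mul0r.
have : xi p * P_tau xi p n != 0 by apply: contraTneq Spos => ->; rewrite mul0r ltxx.
rewrite mulf_eq0 negb_or => /andP[x0 P0].
rewrite P_sorted_tau_partition // q_partition // sp.
by field; rewrite x0 P0 gt_eqF.
Qed.

End Proposition14.

Theorem proposition14 (R : realType) (xi : nat -> R) (q : nat -> seq nat -> R) :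
  (forall k, (0 <= xi k)%R) ->
  ((fun N : nat => \sum_(k < N) xi k)%R @ \oo --> (1%R : R))%classic ->
  ((fun N : nat => \sum_(k < N) (k%:R * xi k))%R @ \oo --> (1%R : R))%classic ->
  (0 < xi 0)%R ->
  support_generates_Z xi ->
  q 1 [:: 1] = 1%R ->
  (forall n, 2 <= n -> (0 < gw_size xi n.+1)%R ->
     forall l, l \in partitions n -> q n l = q_formula xi n l) ->
  (* (i) *)
  (forall n, 1 <= n -> (0 < gw_size xi n)%R ->
     forall u, gw_cond xi n u = Qlaw q n u)
  /\
  (* (ii) *)
  (forall n, 1 <= n -> (0 < gw_size xi n.+1)%R ->
     forall p,
       (\sum_(l <- partitions n | size l == p) q n l)%R
         = (xi p * P_tau xi p n / P_tau xi 1 n.+1)%R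
       /\
       ((0 < \sum_(l <- partitions n | size l == p) q n l)%R ->
        forall l, l \in partitions n ->
          ((if size l == p then q n l else 0)
             / \sum_(l' <- partitions n | size l' == p) q n l')%R
          = (P_sorted_tau xi p n l / P_tau xi p n)%R)).
Proof.
move=> xi_ge0 _ _ _ _ q1 q_formula_ge2.
have q_formulaE m : 0 < m -> (0 < gw_size xi m.+1)%R ->
    forall l, l \in partitions m -> q m l = q_formula xi m l.
  case: m => [|[|m]] // _ G2; last exact: q_formula_ge2.
  by move=> l; rewrite partitions1 inE => /eqP ->; rewrite q1 q_formula1.
split=> [n n0 Gn u | n n0 Gn p]; first exact: gw_cond_Qlaw.
by split=> [|Spos l]; [apply: sum_q_size | apply: q_cond_size].
Qed.
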